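(* Let $\mathcal{A}*\mathcal{X}=\mathcal{B}$ be a consistent tensor system with unique solution $\mathcal{X}^*$, $\mathcal{A}\in\mathbb{R}^{n_1\times n_2\times n}$, $\mathcal{B}\in\mathbb{R}^{n_1\times n_3\times n}$, let $\alpha>0$, and let $\mathcal{X}(t)$ be the iterates of cyclic frontal slice descent with learning rate $\alpha$. With $\mathcal{E}(t)=\|\mathcal{X}(t)-\mathcal{X}^*\|_F$ (so $\mathcal{E}(t)=\|\mathcal{X}^*\|_F$ for $t\le 0$), $$\kappa=\max_{i=1,\dots,n}\|\mathcal{I}-\alpha\tilde{\mathcal{A}}_i^T*\tilde{\mathcal{A}}_i\|_{op},\qquad \mu=\max_{i\neq j}\|\tilde{\mathcal{A}}_i^T*\tilde{\mathcal{A}}_j\|_{op},$$ we have for every $t\ge 0$: $$\mathcal{E}(t+1)\le\kappa\,\mathcal{E}(t)+\alpha\mu\sum_{i=1}^{n-1}\mathcal{E}(t-i).$$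
   Context: For $\mathcal{A}\in\mathbb{R}^{n_1\times n_2\times n}$ with frontal slices $A_k=\mathcal{A}(:,:,k)$: $\mathrm{unfold}(\mathcal{A})$ stacks $A_1,\dots,A_n$ vertically, $\mathrm{fold}$ is its inverse, $\mathrm{bcirc}(\mathcal{A})$ is the $n_1n\times n_2n$ block-circulant matrix with $(p,q)$ block $A_{((p-q)\bmod n)+1}$, and $\mathcal{A}*\mathcal{X}=\mathrm{fold}(\mathrm{bcirc}(\mathcal{A})\mathrm{unfold}(\mathcal{X}))$. $\mathcal{I}$ is the identity tensor (first frontal slice the identity matrix, others zero). $\mathcal{A}^T$ transposes each frontal slice and reverses the order of slices $2,\dots,n$. $\|\cdot\|_F$ is the Frobenius norm and $\|\mathcal{C}\|_{op}=\sup_{\|\mathcal{X}\|_F=1}\|\mathcal{C}*\mathcal{X}\|_F=\|\mathrm{bcirc}(\mathcal{C})\|_2$. $\tilde{\mathcal{A}}_k$ has $k$-th frontal slice $A_k$ and zeros elsewhere. Cyclic frontal slice descent: set $\mathcal{X}(t)=0$ for $t\le 0$; for $t=0,1,\dots$ let $\mathcal{R}(t+1)=\mathcal{B}-\sum_{j=0}^{n-1}\tilde{\mathcal{A}}_{((t-j)\bmod n)+1}*\mathcal{X}(t-j)$ and $\mathcal{X}(t+1)=\mathcal{X}(t)+\alpha\tilde{\mathcal{A}}_{(t\bmod n)+1}^T*\mathcal{R}(t+1)$. *)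

From HB Require Import structures.
From mathcomp Require Import all_boot all_order all_algebra.
From mathcomp Require Import boolp classical_sets reals.
Set Implicit Arguments. Unset Strict Implicit. Unset Printing Implicit Defensive.
Import Order.TTheory GRing.Theory Num.Theory.
Local Open Scope ring_scope.
Local Open Scope classical_set_scope.

(* A third-order tensor in R^{m1 x m2 x n}, given by its frontal slices,
   indexed 0..n-1 (slice k here is slice k+1 of the paper). *)
Definition tensor (R : Type) (m1 m2 n : nat) := 'I_n -> 'M[R]_(m1, m2).

Lemma ord_gt0 n (i : 'I_n) : (0 < n)%N.
Proof. exact: leq_ltn_trans (leq0n i) (ltn_ord i). Qed.

Definition ordmod n (i : 'I_n) (m : nat) : 'I_n := Ordinal (ltn_pmod m (ord_gt0 i)).

Section Tensors.
Variable R : realType.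

Definition tzero m1 m2 n : tensor R m1 m2 n := fun _ => 0.
Definition tadd m1 m2 n (X Y : tensor R m1 m2 n) : tensor R m1 m2 n := fun k => X k + Y k.
Definition tsub m1 m2 n (X Y : tensor R m1 m2 n) : tensor R m1 m2 n := fun k => X k - Y k.
Definition tscale m1 m2 n (a : R) (X : tensor R m1 m2 n) : tensor R m1 m2 n := fun k => a *: X k.

(* t-product: A * X = fold(bcirc(A) unfold(X)); block (p,q) of bcirc(A) is
   the slice ((p - q) mod n) (0-indexed), so slice p of A*X is
   sum_q A_{(p-q) mod n} X_q. *)
Definition tprod m1 m2 m3 n (A : tensor R m1 m2 n) (X : tensor R m2 m3 n)
  : tensor R m1 m3 n :=
  fun p => \sum_(q < n) A (ordmod p (p + n - q)) *m X q.

(* transpose: transpose each slice and reverse the order of slices 2..n *)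
Definition ttr m1 m2 n (A : tensor R m1 m2 n) : tensor R m2 m1 n :=
  fun k => (A (ordmod k (n - k)))^T.

Definition tid m n : tensor R m m n := fun k => if val k == 0%N then 1%:M else 0.

Definition tilde m1 m2 n (A : tensor R m1 m2 n) (k : nat) : tensor R m1 m2 n :=
  fun j => if val j == (k %% n)%N then A j else 0.

Definition fnorm m1 m2 n (X : tensor R m1 m2 n) : R :=
  Num.sqrt (\sum_(k < n) \sum_(i < m1) \sum_(j < m2) (X k i j) ^+ 2).

Definition opnorm m2 m3 n (C : tensor R m2 m2 n) : R :=
  sup [set fnorm (tprod C X) | X in [set X : tensor R m2 m3 n | fnorm X = 1]].

(* Cyclic frontal slice descent.
   cfsd_hist t s = X(s) for s <= t (0-indexed nat times), X(0) = 0. *)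
Section CFSD.
Variables (n1 n2 n3 n : nat) (A : tensor R n1 n2 n) (B : tensor R n1 n3 n) (alpha : R).

(* X(t'+1) from the history h (h s = X(s) for s <= t') *)
Definition cfsd_step (h : nat -> tensor R n2 n3 n) (t' : nat) : tensor R n2 n3 n :=
  let Rt := tsub B (\big[@tadd n1 n3 n/@tzero n1 n3 n]_(j < n)
               tprod (tilde A (t' + n - j)%N) (if (j <= t')%N then h (t' - j)%N
                                              else @tzero n2 n3 n)) in
  tadd (h t') (tscale alpha (tprod (ttr (tilde A t')) Rt)).

Fixpoint cfsd_hist (t : nat) : nat -> tensor R n2 n3 n :=
  match t with
  | 0%N => fun _ => @tzero n2 n3 n
  | t'.+1 => let h := cfsd_hist t' in
             fun s => if (s <= t')%N then h s else cfsd_step h t'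
  end.

Definition cfsd (t : nat) : tensor R n2 n3 n := cfsd_hist t t.

Definition cfsd_int (t : int) : tensor R n2 n3 n :=
  match t with Posz k => cfsd k | Negz _ => @tzero n2 n3 n end.
End CFSD.
End Tensors.

From HB Require Import structures.
From mathcomp Require Import all_boot all_order all_algebra.
From mathcomp Require Import boolp classical_sets reals.
From mathcomp Require Import ring lra.
Set Implicit Arguments. Unset Strict Implicit. Unset Printing Implicit Defensive.
Import Order.TTheory GRing.Theory Num.Theory.
Local Open Scope ring_scope.

(* Let Z(s) = X(s) - X* be the error.  The frontal slices partition A, so
   A = \sum_j Ã_(t-j) for every t, and since B = A * X* the residual is
   R(t+1) = - \sum_j Ã_(t-j) * Z(t-j).  Hence
     Z(t+1) = (I - α Ã_t^T * Ã_t) * Z(t) - α \sum_(0<j<n) (Ã_t^T * Ã_(t-j)) * Z(t-j),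
   and the bound follows from the triangle inequality for the Frobenius norm
   and ||C * Y||_F <= ||C||_op ||Y||_F; the supremum defining ||C||_op is finite
   because the t-product is bilinear in finite dimension.  For 0 < j < n the
   slice indices t and t-j differ mod n, so each cross term is bounded by μ. *)

Section L2Norm.
Variables (R : rcfType) (I : finType).
Implicit Types (f g : I -> R) (a c : R).

Definition l2norm f := Num.sqrt (\sum_x f x ^+ 2).

Lemma l2norm_ge0 f : 0 <= l2norm f.
Proof. exact: sqrtr_ge0. Qed.

Lemma sumr_sqr_ge0 f : 0 <= \sum_x f x ^+ 2.
Proof. by apply: sumr_ge0 => x _; exact: sqr_ge0. Qed.

Lemma sqr_sum_mul_le f g :
  (\sum_x f x * g x) ^+ 2 <= (\sum_x f x ^+ 2) * (\sum_x g x ^+ 2).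
Proof.
pose sq i j := f i ^+ 2 * g j ^+ 2.
pose cross i j := (f i * g i) * (f j * g j).
have lagrange : \sum_i \sum_j (f i * g j - f j * g i) ^+ 2
    = \sum_i \sum_j sq i j + \sum_i \sum_j sq j i - 2 * \sum_i \sum_j cross i j.
  rewrite mulr_sumr -big_split /= -sumrB; apply: eq_bigr => i _.
  rewrite mulr_sumr -big_split /= -sumrB; apply: eq_bigr => j _.
  by rewrite /sq /cross; ring.
have sqE : \sum_i \sum_j sq i j = (\sum_x f x ^+ 2) * (\sum_x g x ^+ 2).
  by rewrite big_distrlr.
have crossE : \sum_i \sum_j cross i j = (\sum_x f x * g x) ^+ 2.
  by rewrite expr2 big_distrlr.
rewrite [\sum_i \sum_j sq j i]exchange_big /= sqE crossE in lagrange.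
have : 0 <= \sum_i \sum_j (f i * g j - f j * g i) ^+ 2.
  by apply: sumr_ge0 => i _; exact: sumr_sqr_ge0.
rewrite lagrange; lra.
Qed.

Lemma sum_mul_le_l2norm f g : \sum_x f x * g x <= l2norm f * l2norm g.
Proof.
apply: le_trans (ler_norm _) _.
rewrite -sqrtr_sqr -sqrtrM ?sumr_sqr_ge0 // ler_sqrt ?sqr_sum_mul_le //.
by rewrite mulr_ge0 ?sumr_sqr_ge0.
Qed.

Lemma l2normD f g : l2norm (fun x => f x + g x) <= l2norm f + l2norm g.
Proof.
have norms_ge0 : 0 <= l2norm f + l2norm g by rewrite addr_ge0 ?l2norm_ge0.
rewrite -(ger0_norm norms_ge0) -sqrtr_sqr ler_sqrt ?sqr_ge0 //.
rewrite sqrrD !sqr_sqrtr ?sumr_sqr_ge0 //.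
have -> : \sum_x (f x + g x) ^+ 2
    = \sum_x f x ^+ 2 + \sum_x g x ^+ 2 + 2 * \sum_x f x * g x.
  by rewrite mulr_sumr -!big_split /=; apply: eq_bigr => x _; ring.
have := sum_mul_le_l2norm f g; lra.
Qed.

Lemma l2normZ a f : l2norm (fun x => a * f x) = `|a| * l2norm f.
Proof.
rewrite /l2norm -sqrtr_sqr -sqrtrM ?sqr_ge0 // mulr_sumr.
by congr Num.sqrt; apply: eq_bigr => x _; rewrite exprMn.
Qed.

Lemma l2normN f : l2norm (fun x => - f x) = l2norm f.
Proof. by congr Num.sqrt; apply: eq_bigr => x _; rewrite sqrrN. Qed.

Lemma l2norm_sum (J : Type) (r : seq J) (P : pred J) (F : J -> I -> R) :
  l2norm (fun x => \sum_(j <- r | P j) F j x) <= \sum_(j <- r | P j) l2norm (F j).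
Proof.
elim: r => [|j r IH].
  rewrite big_nil /l2norm big1 ?sqrtr0 // => x _.
  by rewrite big_nil expr0n.
rewrite big_cons; under eq_fun => x do rewrite big_cons.
case: (P j) => //; apply: le_trans (l2normD _ _) _.
by rewrite lerD2l.
Qed.

Lemma ler_abs_l2norm f x : `|f x| <= l2norm f.
Proof.
rewrite -sqrtr_sqr ler_sqrt ?sumr_sqr_ge0 // (bigD1 x) //= lerDl.
by apply: sumr_ge0 => y _; exact: sqr_ge0.
Qed.

Lemma l2norm_le_card f c :
  (forall x, `|f x| <= c) -> l2norm f <= Num.sqrt (#|I|%:R * c ^+ 2).
Proof.
move=> f_le; rewrite ler_sqrt; last by rewrite mulr_ge0 ?sqr_ge0.
rewrite -sum1_card natr_sum mulr_suml; apply: ler_sum => x _.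
by have /ler_normlP[] := f_le x; rewrite mul1r; nra.
Qed.
End L2Norm.

Section TensorLinearity.
Variables (R : realType) (n : nat).
Local Notation tensor m1 m2 := (tensor R m1 m2 n).

Lemma big_tadd_slice m1 m2 (J : Type) (r : seq J) (P : pred J)
    (F : J -> tensor m1 m2) k :
  (\big[@tadd R m1 m2 n/@tzero R m1 m2 n]_(j <- r | P j) F j) k
    = \sum_(j <- r | P j) F j k.
Proof. exact: (big_morph (fun X : tensor m1 m2 => X k) (id1 := 0) (op1 := +%R)). Qed.

Lemma tprod_suml m1 m2 m3 (J : Type) (r : seq J) (P : pred J)
    (F : J -> tensor m1 m2) (X : tensor m2 m3) p :
  tprod (fun k => \sum_(j <- r | P j) F j k) X p = \sum_(j <- r | P j) tprod (F j) X p.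
Proof.
rewrite /tprod; under eq_bigr => q _ do rewrite mulmx_suml.
by rewrite exchange_big.
Qed.

Lemma tprod_sumr m1 m2 m3 (C : tensor m1 m2) (J : Type) (r : seq J) (P : pred J)
    (F : J -> tensor m2 m3) p :
  tprod C (fun k => \sum_(j <- r | P j) F j k) p = \sum_(j <- r | P j) tprod C (F j) p.
Proof.
rewrite /tprod; under eq_bigr => q _ do rewrite mulmx_sumr.
by rewrite exchange_big.
Qed.

Lemma tprodBl m1 m2 m3 (C D : tensor m1 m2) (X : tensor m2 m3) p :
  tprod (tsub C D) X p = tprod C X p - tprod D X p.
Proof. by rewrite /tprod -sumrB; apply: eq_bigr => q _; rewrite mulmxBl. Qed.

Lemma tprodBr m1 m2 m3 (C : tensor m1 m2) (X Y : tensor m2 m3) p :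
  tprod C (tsub X Y) p = tprod C X p - tprod C Y p.
Proof. by rewrite /tprod -sumrB; apply: eq_bigr => q _; rewrite mulmxBr. Qed.

Lemma tprodNr m1 m2 m3 (C : tensor m1 m2) (X : tensor m2 m3) p :
  tprod C (fun k => - X k) p = - tprod C X p.
Proof. by rewrite /tprod -sumrN; apply: eq_bigr => q _; rewrite mulmxN. Qed.

Lemma tprodZl m1 m2 m3 a (C : tensor m1 m2) (X : tensor m2 m3) p :
  tprod (tscale a C) X p = a *: tprod C X p.
Proof. by rewrite /tprod scaler_sumr; apply: eq_bigr => q _; rewrite scalemxAl. Qed.

Lemma tprodZr m1 m2 m3 a (C : tensor m1 m2) (X : tensor m2 m3) :
  tprod C (tscale a X) = tscale a (tprod C X).
Proof.
apply: funext => p; rewrite /tscale /tprod scaler_sumr.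
by apply: eq_bigr => q _; rewrite scalemxAr.
Qed.
End TensorLinearity.

Section FrobeniusNorm.
Variables (R : realType) (n : nat).
Local Notation tensor m1 m2 := (tensor R m1 m2 n).

Definition flat m1 m2 (X : tensor m1 m2) : 'I_n * ('I_m1 * 'I_m2) -> R :=
  fun x => X x.1 x.2.1 x.2.2.

Lemma fnorm_flat m1 m2 (X : tensor m1 m2) : fnorm X = l2norm (flat X).
Proof.
congr Num.sqrt; under eq_bigr => k _ do rewrite pair_bigA.
by rewrite pair_bigA.
Qed.

Lemma fnorm_ge0 m1 m2 (X : tensor m1 m2) : 0 <= fnorm X.
Proof. exact: sqrtr_ge0. Qed.

Lemma ler_abs_fnorm m1 m2 (X : tensor m1 m2) k i j : `|X k i j| <= fnorm X.
Proof. by rewrite fnorm_flat; exact: (ler_abs_l2norm (flat X) (k, (i, j))). Qed.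

Lemma fnormZ m1 m2 a (X : tensor m1 m2) : fnorm (tscale a X) = `|a| * fnorm X.
Proof.
rewrite !fnorm_flat -l2normZ; congr l2norm.
by apply: funext => -[k [i j]]; rewrite /flat /tscale mxE.
Qed.

Lemma fnormB_le m1 m2 (X Y : tensor m1 m2) : fnorm (tsub X Y) <= fnorm X + fnorm Y.
Proof.
rewrite !fnorm_flat (_ : flat (tsub X Y) = fun x => flat X x + - flat Y x).
  by rewrite -(l2normN (flat Y)); exact: (l2normD (flat X) (fun x => - flat Y x)).
by apply: funext => -[k [i j]]; rewrite /flat /tsub !mxE.
Qed.

Lemma fnorm_sum_le m1 m2 (J : Type) (r : seq J) (P : pred J) (F : J -> tensor m1 m2) :
  fnorm (fun k => \sum_(j <- r | P j) F j k) <= \sum_(j <- r | P j) fnorm (F j).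
Proof.
under eq_bigr => j _ do rewrite fnorm_flat.
rewrite fnorm_flat (_ : flat _ = fun x => \sum_(j <- r | P j) flat (F j) x).
  exact: l2norm_sum.
by apply: funext => -[k [i j]]; rewrite /flat summxE.
Qed.

Lemma abs_tprod_le m1 m2 m3 (C : tensor m1 m2) (Y : tensor m2 m3) p i j :
  `|tprod C Y p i j| <= (n * m2)%:R * (fnorm C * fnorm Y).
Proof.
rewrite /tprod summxE; apply: le_trans (ler_norm_sum _ _ _) _.
have term_le (q : 'I_n) :
    `|(C (ordmod p (p + n - q)) *m Y q) i j| <= m2%:R * (fnorm C * fnorm Y).
  rewrite mxE; apply: le_trans (ler_norm_sum _ _ _) _.
  apply: (@le_trans _ _ (\sum_(l < m2) fnorm C * fnorm Y)).
    by apply: ler_sum => l _; rewrite normrM ler_pM ?ler_abs_fnorm.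
  by rewrite big_const_ord iter_addr_0 mulr_natl.
apply: le_trans (ler_sum _ (fun q _ => term_le q)) _.
by rewrite big_const_ord iter_addr_0 -mulr_natl natrM; lra.
Qed.

Lemma has_ubound_fnorm_tprod m m3 (C : tensor m m) :
  has_ubound [set fnorm (tprod C X) | X in [set X : tensor m m3 | fnorm X = 1]].
Proof.
exists (Num.sqrt (#|{: 'I_n * ('I_m * 'I_m3)}|%:R * ((n * m)%:R * fnorm C) ^+ 2)).
move=> _ [X /= X1 <-]; rewrite fnorm_flat; apply: l2norm_le_card => -[p [i j]].
by have := abs_tprod_le C X p i j; rewrite X1 mulr1.
Qed.

Lemma fnorm_tprod_le m m3 (C : tensor m m) (Y : tensor m m3) :
  fnorm (tprod C Y) <= opnorm m3 C * fnorm Y.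
Proof.
have [Y0 | Yn0] := eqVneq (fnorm Y) 0.
  rewrite Y0 mulr0 fnorm_flat.
  have := @l2norm_le_card _ _ (flat (tprod C Y)) 0.
  rewrite expr0n mulr0 sqrtr0; apply => -[p [i j]].
  by have := abs_tprod_le C Y p i j; rewrite Y0 !mulr0.
have Y_gt0 : 0 < fnorm Y by rewrite lt_def Yn0 fnorm_ge0.
have unitY : fnorm (tscale (fnorm Y)^-1 Y) = 1.
  by rewrite fnormZ ger0_norm ?invr_ge0 ?fnorm_ge0 // mulVf.
have := ub_le_sup (has_ubound_fnorm_tprod m3 C) (ex_intro2 _ _ _ unitY erefl).
rewrite tprodZr fnormZ ger0_norm ?invr_ge0 ?fnorm_ge0 //.
by rewrite mulrC ler_pdivrMr.
Qed.
End FrobeniusNorm.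

Lemma inZp_addnB n t (j : 'I_n.+1) : inZp (t + n.+1 - j) = inZp t - j.
Proof. by apply: val_inj; rewrite /= modnDm addnBA // ltnW. Qed.

Lemma sum_nat1_ord_neq0 (V : zmodType) m (F : nat -> V) :
  \sum_(1 <= i < m.+1) F i = \sum_(j < m.+1 | j != ord0) F j.
Proof. by apply: (addrI (F 0%N)); rewrite -big_ltn // big_mkord (bigD1 ord0). Qed.

Lemma tilde_modn (R : realType) m1 m2 n (A : tensor R m1 m2 n) k :
  tilde A (k %% n) = tilde A k.
Proof. by apply: funext => j; rewrite /tilde modn_mod. Qed.

Section CyclicTensorAlgebra.
Variables (R : realType) (n : nat).
Local Notation N := n.+1.
Local Notation tensor m1 m2 := (tensor R m1 m2 N).

Lemma tprodE m1 m2 m3 (C : tensor m1 m2) (X : tensor m2 m3) p :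
  tprod C X p = \sum_(q < N) C (p - q) *m X q.
Proof.
apply: eq_bigr => q _; congr (C _ *m _).
have -> : ordmod p (p + N - q) = inZp (p + N - q) by exact: val_inj.
by rewrite inZp_addnB valZpK.
Qed.

Lemma tid_tprod m m3 (X : tensor m m3) : tprod (@tid R m N) X = X.
Proof.
apply: funext => p; rewrite tprodE (bigD1 p) //= subrr mul1mx big1 ?addr0 // => q qNp.
by rewrite /tid -[0%N]/(val (0 : 'I_N)) val_eqE subr_eq0 eq_sym (negbTE qNp) mul0mx.
Qed.

Lemma tprodA m1 m2 m3 m4 (C : tensor m1 m2) (D : tensor m2 m3) (X : tensor m3 m4) :
  tprod (tprod C D) X = tprod C (tprod D X).
Proof.
apply: funext => p; rewrite !tprodE.
under [RHS]eq_bigr => q _ do rewrite tprodE mulmx_sumr.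
rewrite exchange_big /=; apply: eq_bigr => r _.
rewrite tprodE mulmx_suml (reindex_inj (addIr (- r))) /=.
by apply: eq_bigr => q _; rewrite mulmxA opprB addrA subrK.
Qed.

Lemma tilde_addnB m1 m2 (A : tensor m1 m2) t (j : 'I_N) :
  tilde A (t + N - j) = tilde A (inZp t - j)%R.
Proof. by rewrite -tilde_modn -(inZp_addnB t j). Qed.

Lemma sum_tilde m1 m2 (A : tensor m1 m2) t :
  (fun k => \sum_(j < N) tilde A (t + N - j) k) = A.
Proof.
apply: funext => k.
have tildeE (j : 'I_N) : tilde A (t + N - j) k = if k == inZp t - j then A k else 0.
  by rewrite /tilde -inZp_addnB -val_eqE.
under eq_bigr => j _ do rewrite tildeE.
rewrite -big_mkcond (big_pred1 (inZp t - k)) // => j /=.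
by rewrite eq_sym (can2_eq (subKr _) (subKr _)).
Qed.
End CyclicTensorAlgebra.

Section CFSDIterates.
Variables (R : realType) (n1 n2 n3 n : nat).
Variables (A : tensor R n1 n2 n) (B : tensor R n1 n3 n) (alpha : R).

Lemma cfsd_hist_le t s : (s <= t)%N -> cfsd_hist A B alpha t s = cfsd A B alpha s.
Proof.
elim: t s => [|t IH] s; first by rewrite leqn0 => /eqP ->.
rewrite leq_eqVlt ltnS /= => /orP[/eqP -> | le_st]; last by rewrite le_st IH.
by rewrite /cfsd /= ltnn.
Qed.

Lemma cfsdS t :
  cfsd A B alpha t.+1 = tadd (cfsd A B alpha t) (tscale alpha
    (tprod (ttr (tilde A t)) (tsub B (\big[@tadd R n1 n3 n/@tzero R n1 n3 n]_(j < n)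
       tprod (tilde A (t + n - j)) (cfsd_int A B alpha (t%:Z - j%:Z)))))).
Proof.
have -> : cfsd A B alpha t.+1 = cfsd_step A B alpha (cfsd_hist A B alpha t) t.
  by rewrite /cfsd /= ltnn.
congr (tadd _ (tscale _ (tprod _ (tsub _ _)))); apply: eq_bigr => j _.
case: leqP => [le_jt | lt_tj]; first by rewrite cfsd_hist_le ?leq_subr // subzn.
have : t%:Z - j%:Z < 0 by rewrite subr_lt0 ltz_nat.
by case: (t%:Z - j%:Z).
Qed.
End CFSDIterates.

Section ErrorRecursion.
Variables (R : realType) (n1 n2 n3 n : nat).
Variables (A : tensor R n1 n2 n.+1) (B : tensor R n1 n3 n.+1).
Variables (Xstar : tensor R n2 n3 n.+1) (alpha : R).
Hypothesis AXstar : tprod A Xstar = B.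
Local Notation N := n.+1.
Local Notation err s := (tsub (cfsd_int A B alpha s) Xstar).

Lemma cfsd_residualE t :
  tsub B (\big[@tadd R n1 n3 N/@tzero R n1 n3 N]_(j < N)
      tprod (tilde A (t + N - j)) (cfsd_int A B alpha (t%:Z - j%:Z)))
    = fun k => - \sum_(j < N) tprod (tilde A (t + N - j)) (err (t%:Z - j%:Z)) k.
Proof.
apply: funext => k; rewrite /tsub big_tadd_slice -AXstar.
rewrite -[X in tprod X Xstar](sum_tilde A t) tprod_suml -sumrB -sumrN.
by apply: eq_bigr => j _; rewrite tprodBr opprB.
Qed.

Lemma cfsd_errS t :
  err t.+1 = tsub
    (tprod (tsub (@tid R n2 N) (tscale alpha (tprod (ttr (tilde A t)) (tilde A t)))) (err t))
    (tscale alpha (fun p => \sum_(j < N | j != ord0)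
       tprod (tprod (ttr (tilde A t)) (tilde A (t + N - j))) (err (t%:Z - j%:Z)) p)).
Proof.
have tilde0 : tilde A (t + N - @ord0 n) = tilde A t.
  by rewrite subn0 -tilde_modn modnDr tilde_modn.
apply: funext => p; rewrite [RHS]/tsub tprodBl tid_tprod tprodZl.
rewrite /tsub -[cfsd_int A B alpha t.+1]/(cfsd A B alpha t.+1) cfsdS cfsd_residualE.
rewrite /tadd /tscale tprodNr tprod_sumr (bigD1 ord0) // tilde0 subr0 -tprodA.
under eq_bigr => j _ do rewrite -tprodA.
have regroup (x y a b : 'M[R]_(n2, n3)) :
    x + alpha *: - (a + b) - y = x - y - alpha *: a - alpha *: b.
  by rewrite scalerN scalerDr opprD -!addrA; congr (_ + _); rewrite addrA addrC.
exact: regroup.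
Qed.
End ErrorRecursion.

Theorem lemma1 (R : realType) (n1 n2 n3 n : nat)
    (A : tensor R n1 n2 n) (B : tensor R n1 n3 n) (Xstar : tensor R n2 n3 n)
    (alpha : R) :
  0 < alpha ->
  tprod A Xstar = B ->
  (forall Y : tensor R n2 n3 n, tprod A Y = B -> Y = Xstar) ->
  let E := fun s : int => fnorm (tsub (cfsd_int A B alpha s) Xstar) in
  let kappa := \big[Num.max/0]_(i < n)
      @opnorm R n2 n3 n (tsub (@tid R n2 n)
                      (tscale alpha (tprod (ttr (tilde A i)) (tilde A i)))) in
  let mu := \big[Num.max/0]_(i < n) \big[Num.max/0]_(j < n | i != j)
      @opnorm R n2 n3 n (tprod (ttr (tilde A i)) (tilde A j)) in
  forall t : nat,
    E (t.+1)%:Z <= kappa * E t%:Z + alpha * mu * \sum_(1 <= i < n) E (t%:Z - i%:Z).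
Proof.
case: n A B Xstar => [|n] A B Xstar.
  move=> _ _ _ E kappa mu t.
  by rewrite /E /kappa /mu /fnorm !big_ord0 sqrtr0 !mulr0 mul0r add0r.
move=> alpha_gt0 AXstar _ E kappa mu t.
pose i0 : 'I_n.+1 := inZp t.
have tilde_i0 : tilde A i0 = tilde A t := tilde_modn A t.
have kappa_ge : opnorm n3 (tsub (@tid R n2 n.+1)
    (tscale alpha (tprod (ttr (tilde A t)) (tilde A t)))) <= kappa.
  by rewrite /kappa -tilde_i0; exact: (le_bigmax _ _ i0).
have mu_ge (j : 'I_n.+1) : j != ord0 ->
    opnorm n3 (tprod (ttr (tilde A t)) (tilde A (t + n.+1 - j))) <= mu.
  move=> j_neq0; rewrite /mu -tilde_i0 tilde_addnB.
  apply: le_trans _ (le_bigmax 0 _ i0).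
  apply: (le_bigmax_cond 0 _ (P := fun k => i0 != k)).
  by apply: contra j_neq0 => /eqP i0E; rewrite -(subKr i0 j) -i0E subrr.
rewrite /E cfsd_errS //.
apply: le_trans (fnormB_le _ _) _; rewrite fnormZ gtr0_norm //.
apply: lerD; first exact: le_trans (fnorm_tprod_le _ _) (ler_wpM2r (fnorm_ge0 _) kappa_ge).
rewrite -mulrA sum_nat1_ord_neq0 mulr_sumr; apply: ler_wpM2l; first exact: ltW.
apply: le_trans (fnorm_sum_le _ _ _) _; apply: ler_sum => j j_neq0.
exact: le_trans (fnorm_tprod_le _ _) (ler_wpM2r (fnorm_ge0 _) (mu_ge j j_neq0)).
Qed.
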